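(* Let $u,v$ be positive integers, let $\mu=(u^v)$ be the $u\times v$ rectangular partition of $n=uv$, and let $s^\mu$ be the number of standard Young tableaux of shape $\mu$. Then $$\left(\frac{n}{u+v}\right)^n\left(\frac{2}{e}\right)^n<s^\mu,$$ where $e=2.71828\ldots$. In particular, if $\alpha\le\frac{n}{u+v}\cdot\frac2e$ then $\alpha^n\le s^\mu$.
   Context: $s^\mu$ equals the dimension of the irreducible representation of $S_n$ over a field of characteristic $0$ indexed by $\mu$, and is given by the hook formula $s^\mu=n!/\prod_{x\in\mu}h_x$, where $h_x$ is the hook number of the box $x$. *)

From mathcomp Require Import all_boot.
From Stdlib Require Import Reals.

Set Implicit Arguments.
Unset Strict Implicit.
Unset Printing Implicit Defensive.

(* A filling of the rectangular Young diagram with v rows and u columns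
   (the partition (u^v) of n = u*v): cell (i, j) = row i, column j.
   Entries are taken in {0, ..., n-1} (instead of {1, ..., n}). *)
Definition rect_filling (u v : nat) := {ffun 'I_v * 'I_u -> 'I_(u * v)}.

(* Standard Young tableau: entries all distinct (hence a bijection onto
   {0..n-1}, by cardinality), strictly increasing along each row (left to
   right) and along each column (top to bottom). *)
Definition is_SYT_rect (u v : nat) (f : rect_filling u v) : bool :=
  [&& injectiveb f,
      [forall i : 'I_v, forall j : 'I_u, forall j' : 'I_u,
          (j < j')%N ==> (f (i, j) < f (i, j'))%N] &
      [forall j : 'I_u, forall i : 'I_v, forall i' : 'I_v,
          (i < i')%N ==> (f (i, j) < f (i', j))%N]].

Definition num_SYT_rect (u v : nat) : nat :=
  #|[pred f : rect_filling u v | is_SYT_rect f]|.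

(* The hook length formula gives n! = s^mu H, where H is the product of the hook
   lengths of the rectangle.  It is proved in Frobenius' form
   s^lam = m! Delta(l) / prod_i l_i!, with l_i = lam_i + v - 1 - i: the right-hand
   side obeys the branching rule s^lam = sum over corners c of s^(lam - c), which
   reduces to the Lagrange interpolation identity
   sum_i l_i prod_(j <> i) (l_i - l_j - 1) / (l_i - l_j) = sum_i l_i - C(v, 2).
   The hooks of a cell and of its mirror image through the centre of the rectangle
   have lengths summing to u + v, so AM-GM gives H <= ((u + v) / 2)^n, and
   n! > (n / e)^n concludes. *)

From Stdlib Require Import Reals Lra.
From mathcomp Require Import all_boot all_algebra zify ring.
Set Implicit Arguments. Unset Strict Implicit. Unset Printing Implicit Defensive.
Import GRing.Theory Num.Theory.

Definition is_corner (lam : nat -> nat) (a : nat) : bool := lam a.+1 < lam a.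

Definition remove_cell (lam : nat -> nat) (a : nat) : nat -> nat :=
  fun i => if i == a then (lam a).-1 else lam i.

Lemma corner_gt0 lam a : is_corner lam a -> 0 < lam a.
Proof. exact: leq_ltn_trans. Qed.

Definition set_cell (t : nat -> nat -> nat) (a b x : nat) : nat -> nat -> nat :=
  fun i j => if (i == a) && (j == b) then x else t i j.

(* Row [i] of the diagram of [lam] consists of the cells [(i, j)] with [j < lam i];
   injectivity and the bound [m] make [t] a bijection onto [0, m) when [lam] has
   [m] cells. *)
Definition standard_tableau (lam : nat -> nat) (m : nat) (t : nat -> nat -> nat) :=
  [/\ forall i j, j < lam i -> t i j < m,
      forall i j j', j < j' -> j' < lam i -> t i j < t i j',
      forall i j, j < lam i.+1 -> t i j < t i.+1 j &
      forall i j i' j', j < lam i -> j' < lam i' -> t i j = t i' j' -> i = i' /\ j = j'].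

Lemma remove_cell_ltn lam a i j : 0 < lam a ->
  (j < remove_cell lam a i) = (j < lam i) && ~~ ((i == a) && (j == (lam a).-1)).
Proof. by rewrite /remove_cell; case: eqP => [->|] /=; lia. Qed.

Lemma standard_set_corner lam a m t :
  (forall i, lam i.+1 <= lam i) -> is_corner lam a ->
  standard_tableau (remove_cell lam a) m t ->
  standard_tableau lam m.+1 (set_cell t a (lam a).-1 m).
Proof.
move=> mono corner [t_lt t_row t_col t_inj].
have lam_a_gt0 := corner_gt0 corner.
set c := (lam a).-1; pose new (i j : nat) := (i == a) && (j == c).
have old i j : j < lam i -> ~~ new i j -> j < remove_cell lam a i.
  by move=> *; rewrite remove_cell_ltn //; apply/andP.
have old_lt i j : j < lam i -> ~~ new i j -> t i j < m by move=> *; apply/t_lt/old.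
have new_cell i j : new i j -> set_cell t a c m i j = m.
  by rewrite /set_cell -/(new i j) => ->.
have old_cell i j : ~~ new i j -> set_cell t a c m i j = t i j.
  by rewrite /set_cell -/(new i j) => /negbTE->.
split.
- move=> i j lt_j; case: (boolP (new i j)) => [/new_cell->|/[dup]/old_cell->] //.
  by move/(old_lt _ _ lt_j)/ltnW.
- move=> i j j' lt_jj' lt_j'; have lt_j := ltn_trans lt_jj' lt_j'.
  case: (boolP (new i j)) => [/andP[/eqP ei /eqP ej]|nj].
    by move: lt_j' lt_jj'; rewrite ei ej /c; lia.
  rewrite old_cell //; case: (boolP (new i j')) => [/new_cell->|nj']; first exact: old_lt.
  by rewrite old_cell //; apply: t_row (old _ _ lt_j' nj').
- move=> i j lt_j; have lt_j0 := leq_trans lt_j (mono i).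
  case: (boolP (new i j)) => [/andP[/eqP ei /eqP ej]|nj].
    by move: lt_j corner; rewrite ei ej /c /is_corner; lia.
  rewrite old_cell //; case: (boolP (new i.+1 j)) => [/new_cell->|nj']; first exact: old_lt.
  by rewrite old_cell //; apply: t_col; apply: old.
- move=> i j i' j' lt_j lt_j'.
  case: (boolP (new i j)) => [/andP[/eqP-> /eqP->]|nj];
    case: (boolP (new i' j')) => [/andP[/eqP-> /eqP->]|nj'] //.
  + rewrite new_cell ?/new ?eqxx // old_cell // => eq_m.
    by have := old_lt _ _ lt_j' nj'; rewrite -eq_m ltnn.
  + rewrite old_cell // new_cell ?/new ?eqxx // => eq_m.
    by have := old_lt _ _ lt_j nj; rewrite eq_m ltnn.
  + by rewrite !old_cell //; apply: t_inj; apply: old.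
Qed.

Fixpoint word_tableau (w : seq nat) : nat -> nat -> nat :=
  if w is a :: w' then set_cell (word_tableau w') a (count_mem a w') (size w')
  else fun _ _ => 0.

Section RemovalWords.

Variable v : nat.

Definition is_partition (lam : nat -> nat) :=
  (forall i, lam i.+1 <= lam i) /\ lam v = 0.

Definition shape_size (lam : nat -> nat) := \sum_(0 <= i < v) lam i.

Lemma partition_leq lam i j : is_partition lam -> i <= j -> lam j <= lam i.
Proof.
case=> mono _; apply: (@homo_leq _ lam (fun x y => y <= x) leqnn _ mono).
by move=> y x z le_yx le_zy; apply: leq_trans le_yx.
Qed.

Lemma partition_zero lam i : is_partition lam -> v <= i -> lam i = 0.
Proof. by move=> lamP /(partition_leq lamP); case: lamP => _ ->; rewrite leqn0 => /eqP. Qed.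

Lemma leq_shape_size lam i : i < v -> lam i <= shape_size lam.
Proof.
move=> lt_iv; rewrite /shape_size (bigD1_seq i) ?iota_uniq ?leq_addr //.
by rewrite mem_index_iota.
Qed.

Lemma corner_lt lam a : is_partition lam -> is_corner lam a -> a < v.
Proof.
by move=> lamP; rewrite ltnNge /is_corner; apply: contraTN => /(partition_zero lamP)->.
Qed.

Lemma is_partition_remove lam a : is_partition lam -> is_corner lam a ->
  is_partition (remove_cell lam a).
Proof.
move=> [mono lam_v] corner; split=> [i|]; rewrite /remove_cell.
  move: corner (mono i); rewrite /is_corner.
  by case: eqP => [<-|_]; case: eqP => [->|_] //; lia.
by case: eqP => [<-|//]; move: corner; rewrite /is_corner lam_v.
Qed.

Lemma shape_size_remove lam a : is_partition lam -> is_corner lam a ->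
  (shape_size (remove_cell lam a)).+1 = shape_size lam.
Proof.
move=> lamP corner; have a_in : a \in index_iota 0 v by rewrite mem_index_iota (corner_lt lamP).
rewrite /shape_size !(bigD1_seq a) ?iota_uniq //=.
rewrite /remove_cell eqxx -addSn prednK ?corner_gt0 //.
by congr (_ + _); apply: eq_bigr => i /negbTE->.
Qed.

(* A word lists the rows of the corners removed one after the other from [lam];
   [word_tableau] puts the largest entry in the first removed cell. *)
Fixpoint removal_words (m : nat) (lam : nat -> nat) : seq (seq nat) :=
  if m is m'.+1 then
    [seq a :: w | a <- [seq a <- iota 0 v | is_corner lam a],
                  w <- removal_words m' (remove_cell lam a)]
  else [:: [::]].

Lemma removal_wordsS m lam w : w \in removal_words m.+1 lam ->
  exists a w', [/\ w = a :: w', is_corner lam a & w' \in removal_words m (remove_cell lam a)].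
Proof.
by case/allpairsPdep=> a [w' [+ w'_in ->]]; rewrite mem_filter => /andP[corner _]; exists a, w'.
Qed.

Lemma uniq_removal_words m lam : uniq (removal_words m lam).
Proof.
elim: m lam => [//|m IH] lam /=; apply: allpairs_uniq_dep => [||[a w] [a' w'] _ _ [-> ->]] //.
  by rewrite filter_uniq // iota_uniq.
Qed.

Lemma size_removal_words m lam : size (removal_words m.+1 lam) =
  \sum_(0 <= a < v | is_corner lam a) size (removal_words m (remove_cell lam a)).
Proof. by rewrite /= size_allpairs_dep sumnE big_map big_filter /index_iota subn0. Qed.

Lemma removal_words_spec m lam w : is_partition lam -> shape_size lam = m ->
  w \in removal_words m lam ->
  [/\ size w = m, forall i, count_mem i w = lam i & standard_tableau lam m (word_tableau w)].
Proof.
elim: m lam w => [|m IH] lam w lamP size_lam.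
  rewrite inE => /eqP->.
  have lam0 i : lam i = 0.
    case: (ltnP i v) => [lt_iv|]; last exact: partition_zero.
    by apply/eqP; rewrite -leqn0 -size_lam leq_shape_size.
  by split=> [//|i|]; [rewrite lam0 | split=> i j; rewrite lam0].
case/removal_wordsS=> a [w' [-> corner w'_in]].
have lam'P := is_partition_remove lamP corner.
have size_lam' : shape_size (remove_cell lam a) = m.
  by apply: succn_inj; rewrite shape_size_remove.
have [size_w' count_w' std_w'] := IH _ _ lam'P size_lam' w'_in.
have count_a : count_mem a w' = (lam a).-1 by rewrite count_w' /remove_cell eqxx.
split=> [|i|]; rewrite /= ?size_w' //.
  rewrite count_w' /remove_cell eq_sym; case: eqP => [->|_] //.
  by rewrite add1n prednK // corner_gt0.
by rewrite count_a; apply: standard_set_corner => //; case: lamP.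
Qed.

Lemma removal_words_cons m lam a w : is_partition lam -> shape_size lam = m.+1 ->
  is_corner lam a -> w \in removal_words m (remove_cell lam a) ->
  word_tableau (a :: w) = set_cell (word_tableau w) a (lam a).-1 m.
Proof.
move=> lamP size_lam corner w_in.
have size' : shape_size (remove_cell lam a) = m.
  by apply: succn_inj; rewrite shape_size_remove.
have [size_w count_w _] := removal_words_spec (is_partition_remove lamP corner) size' w_in.
by rewrite /= size_w count_w /remove_cell eqxx.
Qed.

Lemma removal_words_inj m lam w1 w2 : is_partition lam -> shape_size lam = m ->
  w1 \in removal_words m lam -> w2 \in removal_words m lam ->
  (forall i j, j < lam i -> word_tableau w1 i j = word_tableau w2 i j) -> w1 = w2.
Proof.
elim: m lam w1 w2 => [|m IH] lam w1 w2 lamP size_lam; first by rewrite !inE => /eqP-> /eqP->.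
move=> w1_in w2_in eq_t.
have [_ _ [_ _ _ t2_inj]] := removal_words_spec lamP size_lam w2_in.
case/removal_wordsS: w1_in => a [w1' [def_w1 corner w1'_in]].
case/removal_wordsS: w2_in => a' [w2' [def_w2 corner' w2'_in]].
rewrite {}def_w1 {}def_w2 in eq_t t2_inj *.
have top b : is_corner lam b -> (lam b).-1 < lam b.
  by move/corner_gt0 => lam_b_gt0; rewrite prednK.
have [eq_a _] : a = a' /\ (lam a).-1 = (lam a').-1.
  apply: t2_inj (top _ corner) (top _ corner') _.
  rewrite -eq_t ?top // !(removal_words_cons lamP size_lam) //.
  by rewrite /set_cell !eqxx.
subst a'; congr (_ :: _).
apply: (IH _ _ _ (is_partition_remove lamP corner) _ w1'_in w2'_in).
  by apply: succn_inj; rewrite shape_size_remove.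
move=> i j lt_j; have := eq_t i j.
rewrite !(removal_words_cons lamP size_lam) // /set_cell.
move: lt_j; rewrite remove_cell_ltn ?corner_gt0 //.
by case/andP=> lt_j /negbTE->; apply.
Qed.

Lemma standard_col_lt lam m t : (forall i, lam i.+1 <= lam i) -> standard_tableau lam m t ->
  forall i i' j, i < i' -> j < lam i' -> t i j < t i' j.
Proof.
move=> mono [_ _ t_col _] i i' j /subnKC <-; elim: (i' - i.+1) => [|d IH] lt_j.
  by rewrite addn0 in lt_j *; apply: t_col.
rewrite addnS in lt_j *; apply: ltn_trans (t_col _ _ lt_j).
by apply: IH; apply: leq_trans lt_j (mono _).
Qed.

End RemovalWords.

Definition rect_shape (u v : nat) : nat -> nat := fun i => if i < v then u else 0.

Lemma is_partition_rect u v : is_partition v (rect_shape u v).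
Proof. by split=> [i|]; rewrite /rect_shape ?ltnn //; case: ifP => [/ltnW->|]. Qed.

Lemma rect_shape_lt u v i : i < v -> rect_shape u v i = u.
Proof. by rewrite /rect_shape => ->. Qed.

Lemma shape_size_const v lam u : (forall i, i < v -> lam i = u) -> shape_size v lam = u * v.
Proof.
move=> lam_u; rewrite /shape_size (@eq_big_nat _ _ _ 0 v _ (fun=> u)) => [|i /andP[_]].
  by rewrite sum_nat_const_nat subn0 mulnC.
exact: lam_u.
Qed.

Lemma shape_size_rect u v : shape_size v (rect_shape u v) = u * v.
Proof. exact/shape_size_const/rect_shape_lt. Qed.

Section RectangleTableaux.

Variables u v : nat.
Hypothesis n_gt0 : 0 < u * v.

Let words := removal_words v (u * v) (rect_shape u v).

Definition rect_filling_of_word (w : seq nat) : rect_filling u v :=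
  [ffun p : 'I_v * 'I_u => Ordinal (ltn_pmod (word_tableau w p.1 p.2) n_gt0)].

Lemma rect_filling_of_wordE w (p : 'I_v * 'I_u) : w \in words ->
  val (rect_filling_of_word w p) = word_tableau w p.1 p.2.
Proof.
move=> w_in; rewrite ffunE /= modn_small //.
have [_ _ [t_lt _ _ _]] := removal_words_spec (is_partition_rect u v) (shape_size_rect u v) w_in.
by apply: t_lt; rewrite /rect_shape ltn_ord.
Qed.

Lemma is_SYT_rect_of_word w : w \in words -> is_SYT_rect (rect_filling_of_word w).
Proof.
move=> w_in; have [mono _] := is_partition_rect u v.
have [_ _ std] := removal_words_spec (is_partition_rect u v) (shape_size_rect u v) w_in.
have [_ t_row _ t_inj] := std.
have in_rect (i : 'I_v) (j : 'I_u) : j < rect_shape u v i by rewrite /rect_shape !ltn_ord.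
apply/and3P; split.
- apply/injectiveP => -[i j] [i' j'] /(congr1 val); rewrite !rect_filling_of_wordE //=.
  by case/(t_inj _ _ _ _ (in_rect i j) (in_rect i' j')) => /val_inj-> /val_inj->.
- apply/forallP => i; apply/forallP => j; apply/forallP => j'; apply/implyP => lt_jj'.
  by rewrite !rect_filling_of_wordE //; apply: t_row.
- apply/forallP => j; apply/forallP => i; apply/forallP => i'; apply/implyP => lt_ii'.
  by rewrite !rect_filling_of_wordE //; apply: (standard_col_lt mono std).
Qed.

Lemma rect_filling_of_word_inj : {in words &, injective rect_filling_of_word}.
Proof.
move=> w1 w2 w1_in w2_in eq_f.
apply: (removal_words_inj (is_partition_rect u v) (shape_size_rect u v) w1_in w2_in).
move=> i j; rewrite /rect_shape; case: (ltnP i v) => [lt_iv lt_ju|_]; last by rewrite ltn0.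
have := congr1 (fun f : rect_filling u v => val (f (Ordinal lt_iv, Ordinal lt_ju))) eq_f.
by rewrite /= !rect_filling_of_wordE.
Qed.

Lemma size_removal_words_rect_le : size words <= num_SYT_rect u v.
Proof.
have uniq_f : uniq (map rect_filling_of_word words).
  by rewrite map_inj_in_uniq ?uniq_removal_words //; apply: rect_filling_of_word_inj.
rewrite -(size_map rect_filling_of_word) -(card_uniqP uniq_f) /num_SYT_rect.
apply/subset_leq_card/subsetP => f /mapP[w w_in ->].
by rewrite inE is_SYT_rect_of_word.
Qed.

End RectangleTableaux.

Section LagrangeWeights.

Local Open Scope ring_scope.
Variables (F : fieldType) (x : nat -> F).

Definition lagrange_weight (k i : nat) : F :=
  \prod_(0 <= j < k | j != i) ((x i - x j - 1) / (x i - x j)).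

Lemma lagrange_weight_recr k i : (i < k)%N ->
  lagrange_weight k.+1 i = lagrange_weight k i * ((x i - x k - 1) / (x i - x k)).
Proof.
by move=> lt_ik; rewrite /lagrange_weight big_mkcond big_nat_recr //= -big_mkcond gtn_eqF.
Qed.

Lemma lagrange_weight_last k :
  lagrange_weight k.+1 k = \prod_(0 <= j < k) ((x k - x j - 1) / (x k - x j)).
Proof.
rewrite /lagrange_weight big_mkcond big_nat_recr //= eqxx mulr1 big_mkcond /=.
by apply: eq_big_nat => j /andP[_ lt_jk]; rewrite ltn_eqF.
Qed.

Lemma in_gtnS_inj k : {in gtn k.+1 &, injective x} -> {in gtn k &, injective x}.
Proof. by move=> x_inj i j /ltnW ? /ltnW ?; apply: x_inj. Qed.

Lemma subr_neq0_in k i j : {in gtn k &, injective x} -> (i < k)%N -> (j < k)%N -> i != j ->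
  x i - x j != 0.
Proof.
by move=> x_inj lt_ik lt_jk; apply: contraNneq => /eqP; rewrite subr_eq0 => /eqP/x_inj->.
Qed.

Lemma prod_partial_fraction k t : {in gtn k &, injective x} ->
  (forall j, (j < k)%N -> t - x j != 0) ->
  \prod_(0 <= j < k) ((t - x j - 1) / (t - x j)) =
  1 - \sum_(0 <= i < k) lagrange_weight k i / (t - x i).
Proof.
elim: k t => [|k IH] t x_inj t_neq; first by rewrite !big_geq // subr0.
have x_inj' := in_gtnS_inj x_inj.
have t_neq_k := t_neq k (ltnSn k).
have neq i j : (i < k.+1)%N -> (j < k.+1)%N -> i != j -> x i - x j != 0 := subr_neq0_in x_inj.
rewrite big_nat_recr //= IH // => [|j /ltnW]; last exact: t_neq.
rewrite big_nat_recr //= lagrange_weight_last IH //; last first.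
  by move=> j lt_jk; apply: neq => //; [apply: ltnW | rewrite gtn_eqF].
have -> : \sum_(0 <= i < k) lagrange_weight k.+1 i / (t - x i) =
    (\sum_(0 <= i < k) lagrange_weight k i / (t - x i)) * ((t - x k - 1) / (t - x k)) +
    (\sum_(0 <= i < k) lagrange_weight k i / (x k - x i)) / (t - x k).
  rewrite !mulr_suml -big_split /=; apply: eq_big_nat => i /andP[_ lt_ik].
  have ti := t_neq i (ltnW lt_ik).
  have ik : x i - x k != 0 by apply: neq => //; [apply: ltnW | rewrite ltn_eqF].
  have ki : x k - x i != 0 by rewrite -opprB oppr_eq0.
  rewrite lagrange_weight_recr //; move: (lagrange_weight k i) => r.
  by field; rewrite t_neq_k ik ki ti.
move: (\sum_(0 <= i < k) _ / (t - _)) (\sum_(0 <= i < k) _ / (x k - _)) => A C.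
by field.
Qed.

Section Sums.

Variable k : nat.
Hypothesis x_inj : {in gtn k.+1 &, injective x}.

Let sub_last_neq0 i : (i < k)%N -> x i - x k != 0.
Proof. by move=> lt_ik; apply: subr_neq0_in x_inj _ _ _; rewrite ?ltn_eqF // ltnW. Qed.

Lemma lagrange_weight_last_sum :
  lagrange_weight k.+1 k = 1 + \sum_(0 <= i < k) lagrange_weight k i / (x i - x k).
Proof.
rewrite lagrange_weight_last (prod_partial_fraction (in_gtnS_inj x_inj)) => [|j lt_jk].
  rewrite -sumrN; congr (_ + _); apply: eq_big_nat => i /andP[_ lt_ik].
  by rewrite -mulrN -invrN opprB.
by rewrite -opprB oppr_eq0 sub_last_neq0.
Qed.

Lemma lagrange_weight_recr_sub i : (i < k)%N ->
  lagrange_weight k.+1 i = lagrange_weight k i - lagrange_weight k i / (x i - x k).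
Proof.
move=> lt_ik; rewrite lagrange_weight_recr //.
by move: (lagrange_weight k i) (sub_last_neq0 lt_ik) => r ?; field.
Qed.

End Sums.

Lemma sum_lagrange_weight k : {in gtn k &, injective x} ->
  \sum_(0 <= i < k) lagrange_weight k i = k%:R.
Proof.
elim: k => [|k IH] x_inj; first by rewrite big_geq.
have x_inj' := in_gtnS_inj x_inj.
rewrite big_nat_recr //= lagrange_weight_last_sum // -natr1 -IH //.
have -> : \sum_(0 <= i < k) lagrange_weight k.+1 i =
    \sum_(0 <= i < k) lagrange_weight k i - \sum_(0 <= i < k) lagrange_weight k i / (x i - x k).
  by rewrite -sumrB; apply: eq_big_nat => i /andP[_]; apply: lagrange_weight_recr_sub.
by move: (\sum_(0 <= i < k) _) (\sum_(0 <= i < k) _ / _) => S T; ring.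
Qed.

Lemma sum_mul_lagrange_weight k : {in gtn k &, injective x} ->
  \sum_(0 <= i < k) x i * lagrange_weight k i = \sum_(0 <= i < k) x i - 'C(k, 2)%:R.
Proof.
elim: k => [|k IH] x_inj; first by rewrite !big_geq // subr0.
have x_inj' := in_gtnS_inj x_inj.
rewrite !big_nat_recr //= lagrange_weight_last_sum // mulrDr mulr1 mulr_sumr.
have -> : \sum_(0 <= i < k) x i * lagrange_weight k.+1 i =
    \sum_(0 <= i < k) (x i * lagrange_weight k i - lagrange_weight k i) -
    \sum_(0 <= i < k) x k * (lagrange_weight k i / (x i - x k)).
  rewrite -sumrB; apply: eq_big_nat => i /andP[_ lt_ik].
  have d_neq0 : x i - x k != 0 by apply: subr_neq0_in x_inj _ _ _; rewrite ?ltn_eqF // ltnW.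
  rewrite lagrange_weight_recr_sub //; move: (lagrange_weight k i) => r.
  by field.
rewrite sumrB IH // sum_lagrange_weight // binS bin1 natrD.
by move: (\sum_(0 <= i < k) x i) (\sum_(0 <= i < k) _ * _) => S T; ring.
Qed.

End LagrangeWeights.

Section Vandermonde.

Local Open Scope ring_scope.
Variable F : fieldType.

Definition vdm (x : nat -> F) (v : nat) : F :=
  \prod_(0 <= j < v) \prod_(0 <= i < j) (x i - x j).

Lemma vdmS x v : vdm x v.+1 = vdm x v * \prod_(0 <= i < v) (x i - x v).
Proof. by rewrite /vdm big_nat_recr. Qed.

Lemma eq_vdm x y v : (forall i, (i < v)%N -> x i = y i) -> vdm x v = vdm y v.
Proof.
move=> eq_xy; apply: eq_big_nat => j /andP[_ lt_jv]; apply: eq_big_nat => i /andP[_ lt_ij].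
by rewrite !eq_xy // (ltn_trans lt_ij).
Qed.

Lemma vdm_lower x v a : {in gtn v &, injective x} -> (a < v)%N ->
  vdm (fun i => if i == a then x i - 1 else x i) v = lagrange_weight x v a * vdm x v.
Proof.
elim: v => [//|v IH] x_inj lt_av.
have x_inj' := in_gtnS_inj x_inj.
have neq i j : (i < v.+1)%N -> (j < v.+1)%N -> i != j -> x i - x j != 0 := subr_neq0_in x_inj.
rewrite !vdmS; move: lt_av; rewrite ltnS leq_eqVlt => /orP[/eqP->|lt_av].
  rewrite (@eq_vdm _ x) => [|i lt_iv]; last by rewrite ltn_eqF.
  rewrite eqxx lagrange_weight_last mulrCA; congr (_ * _); rewrite -big_split /=.
  apply: eq_big_nat => i /andP[_ lt_iv].
  have d_neq0 := neq v i (ltnSn v) (ltnW lt_iv) (negbT (gtn_eqF lt_iv)).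
  by rewrite (ltn_eqF lt_iv); field.
rewrite IH // lagrange_weight_recr // (gtn_eqF lt_av).
have a_in : a \in index_iota 0 v by rewrite mem_index_iota.
rewrite !(bigD1_seq a) ?iota_uniq //=.
rewrite eqxx (eq_bigr (fun i => x i - x v)) => [|i /negbTE-> //].
have := neq a v (ltnW lt_av) (ltnSn v) (negbT (ltn_eqF lt_av)).
move: (\prod_(_ <- _ | _) _) (lagrange_weight x v a) (vdm x v) => P R D d_neq0.
by field.
Qed.

End Vandermonde.

Definition rect_hook_prod (u v : nat) : nat :=
  \prod_(0 <= i < v) \prod_(0 <= j < u) (i + j).+1.

Lemma prod_sub_fact j : \prod_(0 <= i < j) (j - i) = j`!.
Proof.
rewrite fact_prod big_add1 /= big_nat_rev.
by apply: eq_big_nat => i /andP[_ lt_ij]; lia.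
Qed.

Lemma fact_addn_prod i u : (i + u)`! = i`! * \prod_(0 <= j < u) (i + j).+1.
Proof.
elim: u => [|u IH]; first by rewrite big_geq ?muln1 ?addn0.
by rewrite big_nat_recr //= addnS factS IH; lia.
Qed.

Section Frobenius.

Variable v : nat.

Definition shifted_part (lam : nat -> nat) (i : nat) : nat := lam i + (v - i.+1).

Local Open Scope ring_scope.

Definition frobenius (lam : nat -> nat) : rat :=
  (shape_size v lam)`!%:R * vdm (fun i => (shifted_part lam i)%:R) v /
  \prod_(0 <= i < v) (shifted_part lam i)`!%:R.

Lemma shifted_part_decr lam i j : is_partition v lam -> (i < j < v)%N ->
  (shifted_part lam j < shifted_part lam i)%N.
Proof.
move=> lamP /andP[lt_ij lt_jv]; have := partition_leq lamP (ltnW lt_ij).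
by rewrite /shifted_part; lia.
Qed.

Lemma shifted_part_inj lam : is_partition v lam ->
  {in gtn v &, injective (fun i => (shifted_part lam i)%:R : rat)}.
Proof.
move=> lamP i j; rewrite !inE /= => lt_iv lt_jv /eqP; rewrite eqr_nat; apply: contraTeq.
case: ltngtP => // [lt_ij|lt_ji] _; rewrite neq_ltn; apply/orP.
  by right; apply: shifted_part_decr; rewrite // lt_ij.
by left; apply: shifted_part_decr; rewrite // lt_ji.
Qed.

Lemma shifted_part_remove lam a i : is_corner lam a ->
  (shifted_part (remove_cell lam a) i)%:R =
  (if i == a then (shifted_part lam i)%:R - 1 else (shifted_part lam i)%:R) :> rat.
Proof.
move/corner_gt0 => lam_a_gt0; rewrite /shifted_part /remove_cell; case: eqP => [->|//].
by rewrite -[in RHS](prednK lam_a_gt0) addSn -natr1 addrK.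
Qed.

Lemma prod_fact_shifted_part_remove lam a : is_partition v lam -> is_corner lam a ->
  \prod_(0 <= i < v) (shifted_part lam i)`!%:R =
  (shifted_part lam a)%:R * \prod_(0 <= i < v) (shifted_part (remove_cell lam a) i)`!%:R :> rat.
Proof.
move=> lamP corner; have a_in : a \in index_iota 0 v by rewrite mem_index_iota (corner_lt lamP).
rewrite !(bigD1_seq a) ?iota_uniq //= mulrA; congr (_ * _).
  rewrite /shifted_part /remove_cell eqxx -{1 2}(prednK (corner_gt0 corner)).
  by rewrite addSn -natrM -factS.
by apply: eq_bigr => i /negbTE ne_ia; rewrite /shifted_part /remove_cell ne_ia.
Qed.

Lemma sum_shifted_part lam :
  \sum_(0 <= i < v) (shifted_part lam i)%:R = (shape_size v lam + 'C(v, 2))%:R :> rat.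
Proof.
rewrite -natr_sum big_split /= -bin2_sum [in X in (_ + X)%N]big_nat_rev /=.
congr ((_ + _)%:R); apply: eq_big_nat => i /andP[_ lt_iv]; lia.
Qed.

Lemma lagrange_weight_noncorner lam a : is_partition v lam -> (a < v)%N -> ~~ is_corner lam a ->
  (shifted_part lam a)%:R * lagrange_weight (fun i => (shifted_part lam i)%:R : rat) v a = 0.
Proof.
move=> lamP lt_av; rewrite /is_corner -leqNgt => le_a.
have eq_a : lam a.+1 = lam a by apply/eqP; rewrite eqn_leq le_a (partition_leq lamP).
apply/eqP; rewrite mulf_eq0 pnatr_eq0; case: (ltnP a.+1 v) => [lt_a1v|le_va1].
  rewrite prodf_seq_eq0 orbC; apply/orP; left.
  apply/hasP; exists a.+1; first by rewrite mem_index_iota.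
  rewrite gtn_eqF //= mulf_eq0 subr_eq0 subr_eq /shifted_part eq_a addrC natr1 eqr_nat.
  by apply/orP; left; apply/eqP; lia.
rewrite /shifted_part -eq_a (partition_zero lamP le_va1).
by rewrite add0n subn_eq0 le_va1.
Qed.

Lemma frobenius_remove lam a : is_partition v lam -> is_corner lam a ->
  frobenius (remove_cell lam a) * (shape_size v lam)%:R =
  frobenius lam * ((shifted_part lam a)%:R *
                   lagrange_weight (fun i => (shifted_part lam i)%:R) v a).
Proof.
move=> lamP corner; rewrite /frobenius -(shape_size_remove lamP corner) factS natrM.
rewrite (prod_fact_shifted_part_remove lamP corner).
rewrite (eq_vdm (fun i _ => shifted_part_remove i corner)).
rewrite (vdm_lower (shifted_part_inj lamP) (corner_lt lamP corner)).
have x_a_neq0 : (shifted_part lam a)%:R != 0 :> rat.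
  by rewrite pnatr_eq0 -lt0n addn_gt0 corner_gt0.
have P_neq0 : \prod_(0 <= i < v) (shifted_part (remove_cell lam a) i)`!%:R != 0 :> rat.
  by rewrite prodf_seq_neq0; apply/allP => i _; rewrite pnatr_eq0 -lt0n fact_gt0.
by field; rewrite x_a_neq0 P_neq0.
Qed.

Lemma vdm_rect lam u : (forall i, (i < v)%N -> lam i = u) ->
  vdm (fun i => (shifted_part lam i)%:R) v * (rect_hook_prod u v)%:R =
  \prod_(0 <= i < v) (shifted_part lam i)`!%:R :> rat.
Proof.
move=> lam_u.
have -> : vdm (fun i => (shifted_part lam i)%:R) v = (\prod_(0 <= j < v) j`!)%N%:R :> rat.
  rewrite natr_prod; apply: eq_big_nat => j /andP[_ lt_jv].
  rewrite -prod_sub_fact natr_prod; apply: eq_big_nat => i /andP[_ lt_ij].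
  rewrite /shifted_part !lam_u ?(ltn_trans lt_ij) // -natrB; last by lia.
  by congr _%:R; lia.
rewrite /rect_hook_prod -!natr_prod -natrM -big_split [in RHS]big_nat_rev /=; congr _%:R.
apply: eq_big_nat => i /andP[_ lt_iv]; rewrite /shifted_part lam_u; last by lia.
by rewrite -fact_addn_prod; congr _`!; lia.
Qed.

Lemma frobenius_branch lam : is_partition v lam -> (0 < shape_size v lam)%N ->
  frobenius lam = \sum_(0 <= a < v | is_corner lam a) frobenius (remove_cell lam a).
Proof.
move=> lamP size_gt0.
have size_neq0 : (shape_size v lam)%:R != 0 :> rat by rewrite pnatr_eq0 -lt0n.
apply: (mulIf size_neq0); rewrite mulr_suml.
have sum_w : (shape_size v lam)%:R = \sum_(0 <= a < v)
    (shifted_part lam a)%:R * lagrange_weight (fun i => (shifted_part lam i)%:R) v a :> rat.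
  rewrite sum_mul_lagrange_weight; last exact: shifted_part_inj.
  by rewrite (sum_shifted_part lam) natrD addrK.
rewrite {1}sum_w mulr_sumr (bigID (is_corner lam)) /= addrC big1_seq ?add0r.
  by apply: eq_bigr => a corner; rewrite frobenius_remove.
move=> a /andP[ncorner]; rewrite mem_index_iota => lt_av.
by rewrite lagrange_weight_noncorner ?mulr0.
Qed.

Lemma frobenius_const lam u : (forall i, (i < v)%N -> lam i = u) ->
  frobenius lam * (rect_hook_prod u v)%:R = (u * v)`!%:R.
Proof.
move=> lam_u; have P_neq0 : \prod_(0 <= i < v) (shifted_part lam i)`!%:R != 0 :> rat.
  by rewrite prodf_seq_neq0; apply/allP => i _; rewrite pnatr_eq0 -lt0n fact_gt0.
rewrite /frobenius (shape_size_const lam_u) -(vdm_rect lam_u).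
rewrite -(vdm_rect lam_u) mulf_eq0 negb_or in P_neq0; case/andP: P_neq0 => D_neq0 H_neq0.
by field; rewrite D_neq0 H_neq0.
Qed.

Lemma frobenius_eq_count m lam : is_partition v lam -> shape_size v lam = m ->
  frobenius lam = (size (removal_words v m lam))%:R.
Proof.
elim: m lam => [|m IH] lam lamP size_lam.
  have lam0 i : (i < v)%N -> lam i = 0.
    by move=> lt_iv; apply/eqP; rewrite -leqn0 -size_lam leq_shape_size.
  have := frobenius_const lam0.
  by rewrite /rect_hook_prod big1 ?mulr1 => [->|i _] //; apply: big_geq.
rewrite frobenius_branch ?size_lam // size_removal_words natr_sum.
apply: eq_bigr => a corner; apply: IH; first exact: is_partition_remove.
by apply: succn_inj; rewrite shape_size_remove.
Qed.

End Frobenius.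

Lemma hook_length_formula_rect u v :
  (u * v)`! = size (removal_words v (u * v) (rect_shape u v)) * rect_hook_prod u v.
Proof.
apply/eqP; rewrite -(eqr_nat rat) natrM.
rewrite -(frobenius_eq_count (is_partition_rect u v) (shape_size_rect u v)).
by rewrite frobenius_const //; apply: rect_shape_lt.
Qed.

Lemma fact_le_num_SYT_rect u v : 0 < u * v ->
  (u * v)`! <= num_SYT_rect u v * rect_hook_prod u v.
Proof.
by move=> n_gt0; rewrite hook_length_formula_rect leq_mul2r size_removal_words_rect_le ?orbT.
Qed.

Lemma prod_nat_cell_const u v c :
  \prod_(0 <= i < v) \prod_(0 <= j < u) c = c ^ (u * v).
Proof. by rewrite big_const_nat iter_muln_1 big_const_nat iter_muln_1 !subn0 -expnM mulnC. Qed.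

Lemma rect_hook_prod_sq_le u v :
  4 ^ (u * v) * (rect_hook_prod u v) ^ 2 <= (u + v) ^ (2 * (u * v)).
Proof.
have rev : rect_hook_prod u v =
    \prod_(0 <= i < v) \prod_(0 <= j < u) ((v - i.+1) + (u - j.+1)).+1.
  rewrite /rect_hook_prod big_nat_rev; apply: eq_big_nat => i /andP[_ lt_iv].
  rewrite big_nat_rev; apply: eq_big_nat => j /andP[_ lt_ju] /=; congr _.+1; lia.
have four : 4 ^ (u * v) = \prod_(0 <= i < v) \prod_(0 <= j < u) 4.
  by rewrite prod_nat_cell_const.
have sq : (u + v) ^ (2 * (u * v)) = \prod_(0 <= i < v) \prod_(0 <= j < u) (u + v) ^ 2.
  by rewrite prod_nat_cell_const -expnM.
rewrite four sq -mulnn {2}rev -!big_split /=.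
rewrite big_nat_cond [leqRHS]big_nat_cond; apply: leq_prod => i /andP[/andP[_ lt_iv] _].
rewrite -!big_split /= big_nat_cond [leqRHS]big_nat_cond.
apply: leq_prod => j /andP[/andP[_ lt_ju] _].
have -> : u + v = (i + j).+1 + ((v - i.+1) + (u - j.+1)).+1 by lia.
exact: (nat_AGM2 _ _).1.
Qed.

Lemma rect_hook_prod_le u v : 2 ^ (u * v) * rect_hook_prod u v <= (u + v) ^ (u * v).
Proof.
rewrite -leq_sqr expnMn -!expnM ![u * v * 2]mulnC [2 ^ _]expnM.
exact: rect_hook_prod_sq_le.
Qed.

Section RealBound.
Local Open Scope R_scope.

Lemma INR_expn m n : INR (m ^ n) = INR m ^ n.
Proof. by elim: n => [|n IH]; rewrite ?expn0 // expnS mulnE mult_INR IH. Qed.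

Lemma exp_mul_INR n x : exp (INR n * x) = exp x ^ n.
Proof.
elim: n => [|n IH]; first by rewrite Rmult_0_l exp_0.
by rewrite S_INR Rmult_plus_distr_r Rmult_1_l exp_plus IH /= Rmult_comm.
Qed.

Lemma exp1_gt1 : 1 < exp 1.
Proof. by have := exp_ineq1 1 R1_neq_R0; lra. Qed.

(* [(1 + 1/a)^a <= e], multiplied through by [a^a]. *)
Lemma succ_pow_le_exp1 a : INR a.+1 ^ a <= exp 1 * INR a ^ a.
Proof.
case: a => [|a]; first by have := exp1_gt1; rewrite /=; lra.
have -> : INR a.+2 = INR a.+1 + 1 by rewrite S_INR.
set x := INR a.+1.
have x_gt0 : 0 < x by apply: lt_0_INR; lia.
have -> : x + 1 = x * (1 + / x).
  by rewrite Rmult_plus_distr_l Rmult_1_r Rinv_r ?S_INR; lra.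
rewrite Rpow_mult_distr Rmult_comm.
apply: Rmult_le_compat_r; first exact/pow_le/Rlt_le.
have -> : exp 1 = exp (/ x) ^ a.+1 by rewrite -exp_mul_INR -/x Rinv_r //; lra.
apply: pow_incr; split; first by have := Rinv_0_lt_compat _ x_gt0; lra.
by apply/Rlt_le/exp_ineq1/Rgt_not_eq/Rinv_0_lt_compat.
Qed.

Lemma pow_lt_fact_exp1 n : INR n.+1 ^ n.+1 < INR n.+1`! * exp 1 ^ n.+1.
Proof.
have e_gt1 := exp1_gt1.
elim: n => [|n IH]; first by rewrite /=; lra.
rewrite factS mulnE mult_INR -[INR n.+2 ^ _]tech_pow_Rmult -[exp 1 ^ n.+2]tech_pow_Rmult.
rewrite Rmult_assoc.
apply: Rmult_lt_compat_l; first by apply: lt_0_INR; lia.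
apply: Rle_lt_trans (succ_pow_le_exp1 n.+1) _.
have := Rmult_lt_compat_l _ _ _ (Rlt_trans _ _ _ Rlt_0_1 e_gt1) IH; lra.
Qed.

Lemma pow_lt_of_fact_le (n A s H : nat) : (0 < n)%N -> (0 < A)%N ->
  (n`! <= s * H)%N -> (2 ^ n * H <= A ^ n)%N ->
  ((INR n / INR A) * (2 / exp 1)) ^ n < INR s.
Proof.
case: n => [//|n] _ A_gt0 /leP/le_INR fact_le /leP/le_INR hook_le.
rewrite mulnE mult_INR in fact_le; rewrite mulnE mult_INR !INR_expn (_ : INR 2 = 2) // in hook_le.
have e_pos := exp_pos 1; have A_pos : 0 < INR A by apply: lt_0_INR; lia.
have AE_pos : 0 < INR A ^ n.+1 * exp 1 ^ n.+1 by apply: Rmult_lt_0_compat; apply: pow_lt.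
apply: (Rmult_lt_reg_r _ _ _ AE_pos).
have -> : ((INR n.+1 / INR A) * (2 / exp 1)) ^ n.+1 * (INR A ^ n.+1 * exp 1 ^ n.+1) =
          INR n.+1 ^ n.+1 * 2 ^ n.+1.
  by rewrite -!Rpow_mult_distr; congr (_ ^ _); field_simplify; lra.
have two_pos : 0 < 2 ^ n.+1 := pow_lt _ n.+1 Rlt_0_2.
apply: Rlt_le_trans (Rmult_lt_compat_r _ _ _ two_pos (pow_lt_fact_exp1 n)) _.
have sE_ge0 : 0 <= INR s * exp 1 ^ n.+1.
  by apply: Rmult_le_pos; [apply: pos_INR | apply/Rlt_le/pow_lt].
have E2_ge0 : 0 <= exp 1 ^ n.+1 * 2 ^ n.+1 by apply/Rlt_le/Rmult_lt_0_compat => //; apply: pow_lt.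
have := Rmult_le_compat_r _ _ _ E2_ge0 fact_le.
have := Rmult_le_compat_l _ _ _ sE_ge0 hook_le.
lra.
Qed.

End RealBound.

(* [all_algebra] bound the key [R] to [ring_scope]; the statement uses it for reals. *)
Delimit Scope R_scope with R.

Theorem lemma3p12 (u v : nat) (hu : (0 < u)%N) (hv : (0 < v)%N) :
  let n := (u * v)%N in
  (((INR n / INR (u + v)) * (2 / exp 1)) ^ n < INR (num_SYT_rect u v))%R /\
  (forall alpha : R, (0 <= alpha)%R ->
     (alpha <= (INR n / INR (u + v)) * (2 / exp 1))%R ->
     (alpha ^ n <= INR (num_SYT_rect u v))%R).
Proof.
move=> n; have n_gt0 : (0 < n)%N by rewrite muln_gt0 hu.
have bound := pow_lt_of_fact_le n_gt0 (ltn_addr v hu) (fact_le_num_SYT_rect n_gt0)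
  (rect_hook_prod_le u v).
split=> // alpha alpha_ge0 alpha_le.
exact: Rle_trans (pow_incr _ _ _ (conj alpha_ge0 alpha_le)) (Rlt_le _ _ bound).
Qed.
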